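(* The two-sided ideal $(z')=z'U^+$ is completely prime, i.e. $U^+/(z')$ is a domain.
   Context: $\Bbbk$ is an algebraically closed field of characteristic zero and $q\in\Bbbk^\times$ is not a root of unity. $U^+$ is the $\Bbbk$-algebra generated by $e_1,e_2$ with relations (S1) $e_1^2e_2-(q^2+q^{-2})e_1e_2e_1+e_2e_1^2=0$ and (S2) $e_2^3e_1-(q^2+1+q^{-2})e_2^2e_1e_2+(q^2+1+q^{-2})e_2e_1e_2^2-e_1e_2^3=0$. Set $e_3=e_1e_2-q^2e_2e_1$, $w=e_2e_3-e_3e_2$, $z'=e_1w-q^{-4}we_1$ (a central element). *)

From mathcomp Require Import all_boot all_order all_algebra.
Set Implicit Arguments. Unset Strict Implicit. Unset Printing Implicit Defensive.
Import GRing.Theory.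
Local Open Scope ring_scope.

(* Elements of the free associative unital k-algebra k<e1,e2>, as syntax. *)
Inductive term (k : Type) : Type :=
| TC of k
| TE1 | TE2
| TAdd of term k & term k
| TMul of term k & term k.
Arguments TE1 {k}. Arguments TE2 {k}.

Section Terms.
Variable k : fieldType.
Definition tscale (c : k) (t : term k) := TMul (TC c) t.
Definition tsub (a b : term k) := TAdd a (tscale (-1) b).

Variable q : k.
Definition S1 : term k :=
  TAdd (tsub (TMul TE1 (TMul TE1 TE2)) (tscale (q^+2 + q^-2) (TMul TE1 (TMul TE2 TE1))))
       (TMul TE2 (TMul TE1 TE1)).
Definition S2 : term k :=
  tsub (TAdd (tsub (TMul TE2 (TMul TE2 (TMul TE2 TE1)))
                   (tscale (q^+2 + 1 + q^-2) (TMul TE2 (TMul TE2 (TMul TE1 TE2)))))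
             (tscale (q^+2 + 1 + q^-2) (TMul TE2 (TMul TE1 (TMul TE2 TE2)))))
       (TMul TE1 (TMul TE2 (TMul TE2 TE2))).
Definition e3 : term k := tsub (TMul TE1 TE2) (tscale (q^+2) (TMul TE2 TE1)).
Definition w : term k := tsub (TMul TE2 e3) (TMul e3 TE2).
Definition z' : term k := tsub (TMul TE1 w) (tscale (q^-4) (TMul w TE1)).

Definition relator (t : term k) : Prop := t = S1 \/ t = S2 \/ t = z'.

(* The smallest congruence on terms making them a unital associative
   k-algebra (k central) in which every relator is 0; i.e. equality in
   k<e1,e2>/(S1,S2,z') = U^+/(z'). *)
Inductive UQ_eq : term k -> term k -> Prop :=
| UQ_refl t : UQ_eq t t
| UQ_sym a b : UQ_eq a b -> UQ_eq b a
| UQ_trans a b c : UQ_eq a b -> UQ_eq b c -> UQ_eq a c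
| UQ_add_cong a a' b b' : UQ_eq a a' -> UQ_eq b b' -> UQ_eq (TAdd a b) (TAdd a' b')
| UQ_mul_cong a a' b b' : UQ_eq a a' -> UQ_eq b b' -> UQ_eq (TMul a b) (TMul a' b')
| UQ_addA a b c : UQ_eq (TAdd a (TAdd b c)) (TAdd (TAdd a b) c)
| UQ_addC a b : UQ_eq (TAdd a b) (TAdd b a)
| UQ_add0 a : UQ_eq (TAdd a (TC 0)) a
| UQ_addN a : UQ_eq (TAdd a (tscale (-1) a)) (TC 0)
| UQ_mulA a b c : UQ_eq (TMul a (TMul b c)) (TMul (TMul a b) c)
| UQ_mul1l a : UQ_eq (TMul (TC 1) a) a
| UQ_mul1r a : UQ_eq (TMul a (TC 1)) a
| UQ_mulDl a b c : UQ_eq (TMul (TAdd a b) c) (TAdd (TMul a c) (TMul b c))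
| UQ_mulDr a b c : UQ_eq (TMul a (TAdd b c)) (TAdd (TMul a b) (TMul a c))
| UQ_add_const (x y : k) : UQ_eq (TAdd (TC x) (TC y)) (TC (x + y))
| UQ_mulC_const (x y : k) : UQ_eq (TMul (TC x) (TC y)) (TC (x * y))
| UQ_central (x : k) a : UQ_eq (TMul (TC x) a) (TMul a (TC x))
| UQ_rel r : relator r -> UQ_eq r (TC 0).
End Terms.

(* Write p = q^2.  In U = U^+/(z') the Serre relations and the centrality of
   z' give commutation relations between e1, e2, e3 = e1 e2 - p e2 e1 and
   w = e2 e3 - e3 e2, among them e3^2 = -p(p+1) e1 w; straightening with them
   shows that U is spanned by the monomials e1^a e3^e w^c e2^d, e in {0, 1}.
   U acts on functions Z x {0,1} x Z x Z -> k through the formulas for left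
   multiplication in this basis.  Order indices by the weight (d, 2a+e, 2c+e),
   lexicographically: every generator, hence every monomial, shifts the
   leading index of a function by a fixed weight and keeps its leading
   coefficient nonzero.  Writing a nonzero x in the spanning set, its monomial
   of largest weight dominates, so x maps a function with a leading term to a
   function with a leading term.  Applying y and then x to a delta function
   shows that x y acts nontrivially when x, y != 0. *)

From HB Require Import structures.
From mathcomp Require Import all_boot all_order all_algebra.
From mathcomp Require Import generic_quotient boolp.
From mathcomp Require Import ring zify.
Set Implicit Arguments. Unset Strict Implicit. Unset Printing Implicit Defensive.
Import GRing.Theory.
Local Open Scope ring_scope.
Local Open Scope quotient_scope.

(** * The quotient algebra *)

Section QuotientAlgebra.
Variables (k : fieldType) (q : k).

(* An encoding into generic trees, to equip terms with a choice structure. *)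
Fixpoint term_to_tree (t : term k) : GenTree.tree k :=
  match t with
  | TC c => GenTree.Leaf c
  | TE1 => GenTree.Node 0 [::]
  | TE2 => GenTree.Node 1 [::]
  | TAdd a b => GenTree.Node 2 [:: term_to_tree a; term_to_tree b]
  | TMul a b => GenTree.Node 3 [:: term_to_tree a; term_to_tree b]
  end.

Fixpoint tree_to_term (x : GenTree.tree k) : option (term k) :=
  match x with
  | GenTree.Leaf c => Some (TC c)
  | GenTree.Node 0 [::] => Some TE1
  | GenTree.Node 1 [::] => Some TE2
  | GenTree.Node 2 [:: a; b] =>
      if (tree_to_term a, tree_to_term b) is (Some a, Some b) then Some (TAdd a b) else None
  | GenTree.Node 3 [:: a; b] =>
      if (tree_to_term a, tree_to_term b) is (Some a, Some b) then Some (TMul a b) else None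
  | _ => None
  end.

Lemma term_to_treeK : pcancel term_to_tree tree_to_term.
Proof. by elim=> //= a -> b ->. Qed.

HB.instance Definition _ := Choice.copy (term k) (pcan_type term_to_treeK).

Definition uq_eqb (a b : term k) : bool := `[< UQ_eq q a b >].

Lemma uq_eqbP a b : reflect (UQ_eq q a b) (uq_eqb a b).
Proof. exact: asboolP. Qed.

Lemma uq_eqb_refl : reflexive uq_eqb.
Proof. by move=> a; apply/uq_eqbP/UQ_refl. Qed.

Lemma uq_eqb_sym : symmetric uq_eqb.
Proof. by move=> a b; apply/uq_eqbP/uq_eqbP; apply: UQ_sym. Qed.

Lemma uq_eqb_trans : transitive uq_eqb.
Proof. by move=> b a c /uq_eqbP ab /uq_eqbP bc; apply/uq_eqbP/(UQ_trans ab bc). Qed.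

Canonical uq_equiv := EquivRel uq_eqb uq_eqb_refl uq_eqb_sym uq_eqb_trans.

Definition UQ := {eq_quot uq_equiv}.
HB.instance Definition _ := Choice.on UQ.

Definition qproj (t : term k) : UQ := \pi_UQ t.

Lemma qproj_eq a b : qproj a = qproj b <-> UQ_eq q a b.
Proof. by split=> [/eqmodP/uq_eqbP | ab]; last apply/eqmodP/uq_eqbP. Qed.

Lemma qproj_ind (P : UQ -> Prop) : (forall t, P (qproj t)) -> forall x, P x.
Proof. by move=> Pt; apply: quotW. Qed.

Lemma repr_qproj a : UQ_eq q a (repr (qproj a)).
Proof. by apply/qproj_eq; rewrite /qproj reprK. Qed.

Definition UQ_zero : UQ := qproj (TC 0).
Definition UQ_one : UQ := qproj (TC 1).
Definition UQ_add (x y : UQ) : UQ := qproj (TAdd (repr x) (repr y)).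
Definition UQ_opp (x : UQ) : UQ := qproj (tscale (-1) (repr x)).
Definition UQ_mul (x y : UQ) : UQ := qproj (TMul (repr x) (repr y)).
Definition UQ_scale (c : k) (x : UQ) : UQ := qproj (tscale c (repr x)).

Lemma qproj_add a b : qproj (TAdd a b) = UQ_add (qproj a) (qproj b).
Proof. by apply/qproj_eq; apply: UQ_add_cong; apply: repr_qproj. Qed.

Lemma qproj_mul a b : qproj (TMul a b) = UQ_mul (qproj a) (qproj b).
Proof. by apply/qproj_eq; apply: UQ_mul_cong; apply: repr_qproj. Qed.

Lemma qproj_scale c a : qproj (tscale c a) = UQ_scale c (qproj a).
Proof. by apply/qproj_eq; apply: UQ_mul_cong; [apply: UQ_refl | apply: repr_qproj]. Qed.

Lemma qproj_opp a : qproj (tscale (-1) a) = UQ_opp (qproj a).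
Proof. exact: qproj_scale. Qed.

Ltac qproj_elim := repeat move=> ?;
  repeat match goal with x : UQ |- _ => elim/qproj_ind: x => ? end;
  rewrite -?(qproj_add, qproj_mul, qproj_scale, qproj_opp); apply/qproj_eq.

Lemma uq_addA : associative UQ_add. Proof. by qproj_elim; apply: UQ_addA. Qed.
Lemma uq_addC : commutative UQ_add. Proof. by qproj_elim; apply: UQ_addC. Qed.
Lemma uq_add0r : left_id UQ_zero UQ_add.
Proof. by qproj_elim; apply: UQ_trans (UQ_addC _ _ _) (UQ_add0 _ _). Qed.
Lemma uq_addNr : left_inverse UQ_zero UQ_opp UQ_add.
Proof. by qproj_elim; apply: UQ_trans (UQ_addC _ _ _) (UQ_addN _ _). Qed.
Lemma uq_mulA : associative UQ_mul. Proof. by qproj_elim; apply: UQ_mulA. Qed.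
Lemma uq_mul1r : left_id UQ_one UQ_mul. Proof. by qproj_elim; apply: UQ_mul1l. Qed.
Lemma uq_mulr1 : right_id UQ_one UQ_mul. Proof. by qproj_elim; apply: UQ_mul1r. Qed.
Lemma uq_mulrDl : left_distributive UQ_mul UQ_add. Proof. by qproj_elim; apply: UQ_mulDl. Qed.
Lemma uq_mulrDr : right_distributive UQ_mul UQ_add. Proof. by qproj_elim; apply: UQ_mulDr. Qed.

HB.instance Definition _ := GRing.isPzRing.Build UQ
  uq_addA uq_addC uq_add0r uq_addNr uq_mulA uq_mul1r uq_mulr1 uq_mulrDl uq_mulrDr.

Lemma uq_scalerA a b x : UQ_scale a (UQ_scale b x) = UQ_scale (a * b) x.
Proof.
qproj_elim; apply: UQ_trans (UQ_mulA _ _ _ _) _.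
by apply: UQ_mul_cong; [apply: UQ_mulC_const | apply: UQ_refl].
Qed.

Lemma uq_scale1r : left_id 1 UQ_scale. Proof. by qproj_elim; apply: UQ_mul1l. Qed.

Lemma uq_scalerDr : right_distributive UQ_scale UQ_add.
Proof. by qproj_elim; apply: UQ_mulDr. Qed.

Lemma uq_scalerDl x : {morph UQ_scale^~ x : a b / a + b >-> UQ_add a b}.
Proof.
move=> a b; qproj_elim; apply: UQ_trans (UQ_mulDl _ _ _ _).
by apply: UQ_mul_cong; [apply/UQ_sym/UQ_add_const | apply: UQ_refl].
Qed.

HB.instance Definition _ := GRing.Zmodule_isLmodule.Build k UQ
  uq_scalerA uq_scale1r uq_scalerDr uq_scalerDl.

Lemma qproj_TAdd a b : qproj (TAdd a b) = qproj a + qproj b. Proof. exact: qproj_add. Qed.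
Lemma qproj_TMul a b : qproj (TMul a b) = qproj a * qproj b. Proof. exact: qproj_mul. Qed.
Lemma qproj_tscale c a : qproj (tscale c a) = c *: qproj a. Proof. exact: qproj_scale. Qed.

Lemma qproj_tsub a b : qproj (tsub a b) = qproj a - qproj b.
Proof. by rewrite /tsub qproj_TAdd qproj_tscale scaleN1r. Qed.

Lemma qproj_TC c : qproj (TC c) = c *: (1 : UQ).
Proof. by rewrite -[1]/(qproj (TC 1)) -qproj_tscale; apply/qproj_eq/UQ_sym/UQ_mul1r. Qed.

Lemma scaleUQAl a (x y : UQ) : a *: (x * y) = a *: x * y.
Proof.
elim/qproj_ind: x => s; elim/qproj_ind: y => t.
by rewrite -[a *: qproj s]qproj_tscale -!qproj_TMul -qproj_tscale; apply/qproj_eq/UQ_mulA.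
Qed.

Lemma scaleUQAr a (x y : UQ) : a *: (x * y) = x * (a *: y).
Proof.
elim/qproj_ind: x => s; elim/qproj_ind: y => t.
rewrite -[a *: qproj t]qproj_tscale -!qproj_TMul -qproj_tscale; apply/qproj_eq.
apply: UQ_trans (UQ_mulA _ _ _ _) _; apply: UQ_trans (UQ_sym (UQ_mulA _ _ _ _)).
by apply: UQ_mul_cong; [apply: UQ_central | apply: UQ_refl].
Qed.

Lemma qproj_eq0 t : qproj t = 0 <-> UQ_eq q t (TC 0).
Proof. exact: qproj_eq. Qed.

Lemma qproj_relator r : relator q r -> qproj r = 0.
Proof. by move=> rr; apply/qproj_eq/UQ_rel. Qed.

End QuotientAlgebra.

Section LinearCombination.
Variables (R : pzRingType) (V : lmodType R) (A B C D : V).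

Definition lcomb4 (a b c d : R) : V := a *: A + b *: B + c *: C + d *: D.

Lemma lcomb4D a b c d a' b' c' d' :
  lcomb4 a b c d + lcomb4 a' b' c' d' = lcomb4 (a + a') (b + b') (c + c') (d + d').
Proof.
by rewrite /lcomb4 !scalerDl addrACA (addrACA (a *: A + b *: B)) (addrACA (a *: A)).
Qed.

Lemma lcomb4Z r a b c d : r *: lcomb4 a b c d = lcomb4 (r * a) (r * b) (r * c) (r * d).
Proof. by rewrite /lcomb4 !scalerDr !scalerA. Qed.

Lemma lcomb4N a b c d : - lcomb4 a b c d = lcomb4 (- a) (- b) (- c) (- d).
Proof. by rewrite -scaleN1r lcomb4Z !mulN1r. Qed.

Lemma lcomb4_A : A = lcomb4 1 0 0 0.
Proof. by rewrite /lcomb4 scale1r !scale0r !addr0. Qed.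
Lemma lcomb4_B : B = lcomb4 0 1 0 0.
Proof. by rewrite /lcomb4 scale1r !scale0r add0r !addr0. Qed.
Lemma lcomb4_C : C = lcomb4 0 0 1 0.
Proof. by rewrite /lcomb4 scale1r !scale0r !add0r addr0. Qed.
Lemma lcomb4_D : D = lcomb4 0 0 0 1.
Proof. by rewrite /lcomb4 scale1r !scale0r !add0r. Qed.

End LinearCombination.

Lemma lincomb_normal (R : pzRingType) (V : lmodType R) (I : eqType) (F : I -> V)
    (s : seq (R * I)) :
  exists r (f : I -> R), [/\ uniq r, {in r, forall i, f i != 0} &
    \sum_(y <- s) y.1 *: F y.2 = \sum_(i <- r) f i *: F i].
Proof.
pose r := undup [seq y.2 | y <- s].
pose f i := \sum_(y <- s) (if y.2 == i then y.1 else 0).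
exists [seq i <- r | f i != 0], f; split.
- exact/filter_uniq/undup_uniq.
- by move=> i; rewrite mem_filter => /andP[].
rewrite big_filter; transitivity (\sum_(i <- r) f i *: F i); last first.
  rewrite [RHS]big_mkcond; apply: eq_bigr => i _.
  by case: eqP => [-> | //]; rewrite scale0r.
under [RHS]eq_bigr do rewrite scaler_suml.
rewrite exchange_big /=; apply: eq_big_seq => y y_s.
rewrite (bigD1_seq y.2) ?undup_uniq ?mem_undup ?map_f //= eqxx big1 ?addr0 // => i /negbTE.
by rewrite eq_sym => ->; rewrite scale0r.
Qed.

(** * Weights and leading terms *)

Definition pbw_index := (nat * bool * nat * nat)%type.

Definition point := (int * bool * int * int)%type.

Definition pbw_point (m : pbw_index) : point :=
  let: (a, e, c, d) := m in (a%:Z, e, c%:Z, d%:Z).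

(* Since e3^2 is proportional to e1 w, e3 gets half of their combined weight;
   each generator then shifts the weight of leading terms by a constant. *)
Definition weight (P : point) : int * int * int :=
  let: (a, e, c, d) := P in (d, 2 * a + e, 2 * c + e).

Definition lex_lt (x y : int * int * int) : bool :=
  let: (x1, x2, x3) := x in let: (y1, y2, y3) := y in
  (x1 < y1) || (x1 == y1) && ((x2 < y2) || (x2 == y2) && (x3 < y3)).

Lemma triple_add (x1 x2 x3 y1 y2 y3 : int) :
  (x1, x2, x3) + (y1, y2, y3) = (x1 + y1, x2 + y2, x3 + y3).
Proof. by []. Qed.

Lemma triple_muln (x1 x2 x3 : int) n : (x1, x2, x3) *+ n = (x1 *+ n, x2 *+ n, x3 *+ n).
Proof. by elim: n => [|n IHn] //; rewrite !mulrS IHn. Qed.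

Lemma lex_lt_trans x y z : lex_lt x y -> lex_lt y z -> lex_lt x z.
Proof. by case: x y z => [[? ?] ?] [[? ?] ?] [[? ?] ?] /=; lia. Qed.

Lemma lex_lt_irr x : lex_lt x x = false.
Proof. by case: x => [[? ?] ?] /=; lia. Qed.

Lemma lex_lt_total x y : x != y -> lex_lt x y || lex_lt y x.
Proof.
by case: x y => [[? ?] ?] [[? ?] ?]; rewrite !xpair_eqE /=; lia.
Qed.

Lemma lex_lt_add2l s x y : lex_lt (s + x) (s + y) = lex_lt x y.
Proof. by case: s x y => [[? ?] ?] [[? ?] ?] [[? ?] ?]; rewrite !triple_add /=; lia. Qed.

Lemma lex_argmax (T : eqType) (K : T -> int * int * int) (r : seq T) :
  injective K -> r != [::] ->
  exists2 m0, m0 \in r & {in r, forall m, m != m0 -> lex_lt (K m) (K m0)}.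
Proof.
move=> K_inj; elim: r => [//|m r IHr] _.
have [-> | r_neq0] := eqVneq r [::].
  by exists m => [|m']; rewrite ?mem_seq1 // => /eqP ->; rewrite eqxx.
have [m0 m0r m0max] := IHr r_neq0.
have [m_lt | m_ge] := boolP (lex_lt (K m0) (K m)).
  exists m; rewrite ?mem_head // => m'.
  rewrite in_cons => /predU1P[-> | m'r _]; first by rewrite eqxx.
  have [-> // | ne] := eqVneq m' m0.
  exact: lex_lt_trans (m0max _ m'r ne) m_lt.
exists m0; first by rewrite in_cons m0r orbT.
move=> m'; rewrite in_cons => /predU1P[-> ne | ]; last exact: m0max.
by move: (@lex_lt_total (K m) (K m0)); rewrite (inj_eq K_inj) ne (negbTE m_ge) orbF; apply.
Qed.

Lemma weight_pbw_inj : injective (fun m => weight (pbw_point m)).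
Proof.
move=> [[[a e] c] d] [[[a' e'] c'] d'] [].
by case: e e' => [] [] /= -> ha hc; first [by exfalso; lia | congr (_, _, _, _); lia].
Qed.

Ltac weight_lia := rewrite /lex_lt /weight ?triple_add /=; lia.

Section LeadingTerms.
Variable k : fieldType.

Definition vec := point -> k.

Definition vadd (u v : vec) : vec := fun P => u P + v P.
Definition vscale (x : k) (v : vec) : vec := fun P => x * v P.

Definition lead_at (u : vec) (P : point) :=
  (forall P', lex_lt (weight P) (weight P') -> u P' = 0) /\ u P != 0.

Definition raises (O : vec -> vec) (s : int * int * int) :=
  forall u P, lead_at u P -> exists2 P', weight P' = weight P + s & lead_at (O u) P'.

Lemma raises_id : raises id 0.
Proof. by move=> u P uP; exists P; rewrite ?addr0. Qed.

Lemma raises_comp O1 O2 s1 s2 : raises O1 s1 -> raises O2 s2 -> raises (O1 \o O2) (s2 + s1).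
Proof.
move=> O1s1 O2s2 u P /O2s2[P2 wP2 /O1s1[P1 wP1 lead1]].
by exists P1; rewrite // wP1 wP2 addrA.
Qed.

Lemma raises_iter n O s : raises O s -> raises (iter n O) (s *+ n).
Proof.
move=> Os; elim: n => [|n IHn]; first exact: raises_id.
by rewrite mulrSr; apply: raises_comp.
Qed.

Definition delta0 : vec := fun P => (P == (0, false, 0, 0))%:R.

Lemma lead_delta0 : lead_at delta0 (0, false, 0, 0).
Proof.
split=> [P' | ]; last by rewrite /delta0 eqxx oner_neq0.
by rewrite /delta0; have [-> | //] := eqVneq P'; rewrite lex_lt_irr.
Qed.

End LeadingTerms.

Section Domain.
Variables (k : fieldType) (q : k).
Hypotheses (q_neq0 : q != 0) (q4_neq1 : q ^+ 4 != 1).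

Local Notation p := (q ^+ 2).
Local Notation UQ := (UQ q).
Local Notation qproj := (@qproj k q).
Local Notation vec := (vec k).
Local Notation delta0 := (delta0 k).

Lemma p_neq0 : p != 0. Proof. exact: expf_neq0. Qed.

Lemma p_neq1 : p != 1.
Proof. by apply: contra q4_neq1 => /eqP p1; rewrite (exprM q 2 2) p1 expr1n. Qed.

Lemma p_sub1_neq0 : p - 1 != 0. Proof. by rewrite subr_eq0 p_neq1. Qed.
Lemma p2_sub1_neq0 : p ^+ 2 - 1 != 0. Proof. by rewrite subr_eq0 -exprM. Qed.

Lemma p_add1_neq0 : p + 1 != 0.
Proof.
apply: contra p2_sub1_neq0 => /eqP p1.
have -> : p ^+ 2 - 1 = (p + 1) * (p - 1) by ring.
by rewrite p1 mul0r.
Qed.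

Definition kappa := - (p * (p + 1)).

Lemma kappa_neq0 : kappa != 0.
Proof. by rewrite oppr_eq0 mulf_neq0 ?p_neq0 ?p_add1_neq0. Qed.

(** * Commutation relations *)

Definition E1 : UQ := qproj TE1.
Definition E2 : UQ := qproj TE2.
Definition E3 : UQ := qproj (e3 q).
Definition W : UQ := qproj (w q).

Lemma E3E : E3 = E1 * E2 - p *: (E2 * E1).
Proof. by rewrite /E3 /e3 qproj_tsub qproj_tscale !qproj_TMul. Qed.

Lemma WE : W = E2 * E3 - E3 * E2.
Proof. by rewrite /W /w qproj_tsub !qproj_TMul. Qed.

Lemma serre1_eq0 :
  E1 * (E1 * E2) - (p + p^-1) *: (E1 * (E2 * E1)) + E2 * (E1 * E1) = 0.
Proof.
by rewrite -(qproj_relator (or_introl erefl)) /S1 qproj_TAdd qproj_tsub qproj_tscale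
  !qproj_TMul.
Qed.

Lemma serre2_eq0 :
  E2 * (E2 * (E2 * E1)) - (p + 1 + p^-1) *: (E2 * (E2 * (E1 * E2)))
  + (p + 1 + p^-1) *: (E2 * (E1 * (E2 * E2))) - E1 * (E2 * (E2 * E2)) = 0.
Proof.
by rewrite -(qproj_relator (or_intror (or_introl erefl))) /S2 !qproj_tsub qproj_TAdd
  !qproj_tsub !qproj_tscale !qproj_TMul.
Qed.

Lemma z'_eq0 : E1 * W - q ^- 4 *: (W * E1) = 0.
Proof.
by rewrite -(qproj_relator (or_intror (or_intror erefl))) /z' qproj_tsub qproj_tscale
  !qproj_TMul.
Qed.

Ltac expand := rewrite ?(mulrBl, mulrBr, mulrDl, mulrDr, scalerBr, scalerDr) -?mulrA
  -?(scaleUQAl, scaleUQAr) -?mulrA ?scalerA.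

(* Once both sides are linear combinations of the monomials [t1, ..., t4],
   compare coefficients.  The variants with fewer monomials pad with repeated
   arguments, whose substitutions are no-ops. *)
Ltac lincomb4 t1 t2 t3 t4 :=
  let A := fresh "A" in let B := fresh "B" in let C := fresh "C" in let D := fresh "D" in
  let L := fresh "L" in
  move: t1 t2 t3 t4; intros A B C D; pose L := lcomb4 A B C D;
  rewrite ?(lcomb4_A A B C D : A = L 1 0 0 0) ?(lcomb4_B A B C D : B = L 0 1 0 0)
          ?(lcomb4_C A B C D : C = L 0 0 1 0) ?(lcomb4_D A B C D : D = L 0 0 0 1) /L;
  rewrite !(lcomb4Z, lcomb4N, lcomb4D); congr lcomb4; field;
  rewrite ?q_neq0 //= mulN1r subr_eq0 eq_sym p_neq1.
Ltac lincomb3 t1 t2 t3 := lincomb4 t1 t2 t3 t3.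
Ltac lincomb2 t1 t2 := lincomb4 t1 t2 t2 t2.
Ltac lincomb1 t1 := lincomb4 t1 t1 t1 t1.

Lemma E3E1 : E3 * E1 = p *: (E1 * E3).
Proof.
apply/subr0_eq; rewrite -(scaler0 _ (- p)) -serre1_eq0 E3E; expand.
lincomb3 (E1 * (E1 * E2)) (E1 * (E2 * E1)) (E2 * (E1 * E1)).
Qed.

Lemma E2E1 : E2 * E1 = p^-1 *: (E1 * E2) - p^-1 *: E3.
Proof. by rewrite E3E; expand; lincomb2 (E1 * E2) (E2 * E1). Qed.

Lemma WE1 : W * E1 = p ^+ 2 *: (E1 * W).
Proof.
apply/subr0_eq; rewrite -(scaler0 _ (- p ^+ 2)) -z'_eq0; expand.
lincomb2 (E1 * W) (W * E1).
Qed.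

Lemma E2W : E2 * W = p *: (W * E2).
Proof.
apply/subr0_eq; rewrite -(scaler0 _ (- p)) -serre2_eq0 WE E3E; expand.
lincomb4 (E2 * (E2 * (E2 * E1))) (E2 * (E2 * (E1 * E2))) (E2 * (E1 * (E2 * E2)))
  (E1 * (E2 * (E2 * E2))).
Qed.

Lemma E2E3 : E2 * E3 = E3 * E2 + W.
Proof. by rewrite WE addrC subrK. Qed.

Lemma E3E3 : E3 * E3 = kappa *: (E1 * W).
Proof.
have WE1_E3E3 : W * E1 = E1 * W + (p^-1 - 1) *: (E3 * E3).
  rewrite {1}WE mulrBl -!mulrA E3E1 E2E1 -scaleUQAr mulrA E2E1; expand.
  rewrite [E3 * (E1 * E2)]mulrA E3E1 WE; expand.
  lincomb3 (E1 * (E2 * E3)) (E1 * (E3 * E2)) (E3 * E3).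
have E3E3_scaled : (p^-1 - 1) *: (E3 * E3) = p ^+ 2 *: (E1 * W) - E1 * W.
  by rewrite -WE1 WE1_E3E3 addrAC subrr add0r.
have pV_sub1_neq0 : p^-1 - 1 != 0 by rewrite subr_eq0 invr_eq1 p_neq1.
rewrite -[E3 * E3]scale1r -(mulVf pV_sub1_neq0) -scalerA E3E3_scaled; expand.
by rewrite /kappa; lincomb1 (E1 * W).
Qed.

(** * Spanning by ordered monomials *)

Definition pbw (m : pbw_index) : UQ :=
  let: (a, e, c, d) := m in E1 ^+ a * (if e then E3 else 1) * W ^+ c * E2 ^+ d.

Lemma pbwE a e c d : pbw (a, e, c, d) = E1 ^+ a * (if e then E3 else 1) * W ^+ c * E2 ^+ d.
Proof. by []. Qed.

Lemma E1_pbw a e c d : E1 * pbw (a, e, c, d) = pbw (a.+1, e, c, d).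
Proof. by rewrite !pbwE !mulrA -exprS. Qed.

Lemma E3_E1n a : E3 * E1 ^+ a = p ^+ a *: (E1 ^+ a * E3).
Proof.
elim: a => [|a IHa]; first by rewrite !expr0 scale1r mulr1 mul1r.
by rewrite exprS mulrA E3E1 -scaleUQAl -!mulrA IHa -scaleUQAr scalerA -exprS.
Qed.

Lemma E3_pbw_false a c d : E3 * pbw (a, false, c, d) = p ^+ a *: pbw (a, true, c, d).
Proof. by rewrite !pbwE !mulr1 !mulrA E3_E1n -!scaleUQAl. Qed.

Lemma E3_pbw_true a c d :
  E3 * pbw (a, true, c, d) = (p ^+ a * kappa) *: pbw (a.+1, false, c.+1, d).
Proof.
rewrite !pbwE !mulr1 !mulrA E3_E1n -!scaleUQAl -(mulrA (E1 ^+ a) E3) E3E3.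
by rewrite -scaleUQAr -!scaleUQAl scalerA !mulrA -exprSr -(mulrA _ W) -exprS.
Qed.

Lemma E2_Wn c : E2 * W ^+ c = p ^+ c *: (W ^+ c * E2).
Proof.
elim: c => [|c IHc]; first by rewrite !expr0 scale1r mulr1 mul1r.
by rewrite exprS mulrA E2W -scaleUQAl -!mulrA IHc -scaleUQAr scalerA -exprS.
Qed.

Lemma E2_pbw_false c d : E2 * pbw (0, false, c, d) = p ^+ c *: pbw (0, false, c, d.+1).
Proof. by rewrite !pbwE !expr0 !mul1r mulrA E2_Wn -!scaleUQAl -mulrA -exprS. Qed.

Lemma E2_pbw_true c d :
  E2 * pbw (0, true, c, d) = E3 * (E2 * pbw (0, false, c, d)) + pbw (0, false, c.+1, d).
Proof. by rewrite !pbwE !expr0 !mul1r !mulrA E2E3 !mulrDl -exprS. Qed.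

Lemma E2_pbw_succ a e c d :
  E2 * pbw (a.+1, e, c, d) =
  p^-1 *: (E1 * (E2 * pbw (a, e, c, d))) - p^-1 *: (E3 * pbw (a, e, c, d)).
Proof. by rewrite -E1_pbw mulrA E2E1 mulrBl -!scaleUQAl -!mulrA. Qed.

Definition spanned (x : UQ) :=
  exists s : seq (k * pbw_index), x = \sum_(y <- s) y.1 *: pbw y.2.

Lemma spanned0 : spanned 0.
Proof. by exists [::]; rewrite big_nil. Qed.

Lemma spannedD x y : spanned x -> spanned y -> spanned (x + y).
Proof. by move=> [s ->] [t ->]; exists (s ++ t); rewrite big_cat. Qed.

Lemma spannedZ a x : spanned x -> spanned (a *: x).
Proof.
move=> [s ->]; exists [seq (a * y.1, y.2) | y <- s].
by rewrite big_map scaler_sumr; apply: eq_bigr => y _; rewrite scalerA.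
Qed.

Lemma spannedB x y : spanned x -> spanned y -> spanned (x - y).
Proof. by move=> sx sy; rewrite -scaleN1r; apply/spannedD/spannedZ. Qed.

Lemma spanned_pbw m : spanned (pbw m).
Proof. by exists [:: (1, m)]; rewrite big_seq1 scale1r. Qed.

Lemma spanned_mull x y : (forall m, spanned (x * pbw m)) -> spanned y -> spanned (x * y).
Proof.
move=> xpbw [s ->]; rewrite mulr_sumr.
elim: s => [|[a m] s IHs]; first by rewrite big_nil; apply: spanned0.
by rewrite big_cons -scaleUQAr; apply: spannedD IHs; apply: spannedZ.
Qed.

Lemma spanned_E1_pbw m : spanned (E1 * pbw m).
Proof. by case: m => [[[a e] c] d]; rewrite E1_pbw; apply: spanned_pbw. Qed.

Lemma spanned_E3_pbw m : spanned (E3 * pbw m).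
Proof.
case: m => [[[a []] c] d]; rewrite ?E3_pbw_true ?E3_pbw_false.
all: by apply: spannedZ; apply: spanned_pbw.
Qed.

Lemma spanned_E2_pbw m : spanned (E2 * pbw m).
Proof.
case: m => [[[a e] c] d]; elim: a => [|a IHa].
  have E2_false : spanned (E2 * pbw (0, false, c, d)).
    by rewrite E2_pbw_false; apply: spannedZ; apply: spanned_pbw.
  case: e => //; rewrite E2_pbw_true.
  by apply: spannedD (spanned_pbw _); apply: spanned_mull E2_false; apply: spanned_E3_pbw.
rewrite E2_pbw_succ; apply: spannedB; apply: spannedZ; last exact: spanned_E3_pbw.
exact: spanned_mull spanned_E1_pbw IHa.
Qed.

Lemma spanned_all x : spanned x.
Proof.
suff spanned_mul y : spanned y -> spanned (x * y).
  rewrite -[x]mulr1; apply: spanned_mul.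
  by have := spanned_pbw (0, false, 0, 0); rewrite pbwE !mulr1.
elim/qproj_ind: x y => t; elim: t => [c | | | s IHs t IHt | s IHs t IHt] y sy.
- by rewrite qproj_TC -scaleUQAl mul1r; apply: spannedZ.
- exact: spanned_mull spanned_E1_pbw sy.
- exact: spanned_mull spanned_E2_pbw sy.
- by rewrite qproj_TAdd mulrDl; apply: spannedD; [apply: IHs | apply: IHt].
- by rewrite qproj_TMul -mulrA; apply/IHs/IHt.
Qed.

(** * A representation *)

Definition pz (n : int) : k := p ^ n.

Lemma pzD m n : pz (m + n) = pz m * pz n. Proof. by rewrite /pz expfzDr // p_neq0. Qed.
Lemma pzN n : pz (- n) = (pz n)^-1. Proof. by rewrite /pz invr_expz. Qed.
Lemma pz_neq0 n : pz n != 0. Proof. by rewrite /pz expfz_neq0 // p_neq0. Qed.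

Definition alpha (a c : int) := pz c * pz (- a).
Definition beta (a : int) := (pz (a + 1) - pz (- a)) / (p - 1).
Definition gamma (a : int) := (pz a - pz (- a)) / (p ^+ 2 - 1).

Lemma alpha_neq0 a c : alpha a c != 0.
Proof. by rewrite mulf_neq0 ?pz_neq0. Qed.

(* [rho1], [rho2], [rho3], [rhoW] transcribe left multiplication by e1, e2, e3, w
   on coefficients in the basis e1^a e3^e w^c e2^d, as computed by the
   straightening lemmas above; the indices range over Z to avoid boundary cases. *)
Definition rho1 (v : vec) : vec := fun '(a, e, c, d) => v (a - 1, e, c, d).
Definition rho2 (v : vec) : vec := fun '(a, e, c, d) =>
  if e then alpha a c * v (a, true, c, d - 1) - gamma (a + 1) * v (a + 1, false, c, d)
  else alpha a c * v (a, false, c, d - 1) + beta a * v (a, true, c - 1, d).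
Definition rho3 (v : vec) : vec := fun '(a, e, c, d) =>
  if e then pz a * v (a, false, c, d) else kappa * pz (a - 1) * v (a - 1, true, c - 1, d).
Definition rhoW (v : vec) : vec := fun '(a, e, c, d) =>
  pz a * pz a * (if e then p else 1) * v (a, e, c - 1, d).

Fixpoint act (t : term k) (v : vec) : vec :=
  match t with
  | TC x => vscale x v
  | TE1 => rho1 v
  | TE2 => rho2 v
  | TAdd s t => vadd (act s v) (act t v)
  | TMul s t => act s (act t v)
  end.

Ltac vext := let a := fresh "a" in let e := fresh "e" in let c := fresh "c" in
  let d := fresh "d" in apply: funext => -[[[a e] c] d].

Ltac pz_field :=
  rewrite /vadd /vscale /alpha /beta /gamma /kappa ?(subrK, addrK) ?(pzD, pzN) /pz
    ?expr1z ?expr0z;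
  field; rewrite ?q_neq0 ?p_sub1_neq0 ?p2_sub1_neq0 ?p_add1_neq0 ?expfz_neq0 ?p_neq0 //.

Lemma act_e3 : act (e3 q) = rho3.
Proof. by apply: funext => v; vext; rewrite /= /rho1 /rho2 /rho3; case: e; pz_field. Qed.

Lemma act_w : act (w q) = rhoW.
Proof.
apply: funext => v; vext; rewrite /w /tsub /tscale; cbn -[e3]; rewrite act_e3.
by rewrite /rho2 /rho3 /rhoW; case: e; pz_field.
Qed.

Lemma act_relator r : relator q r -> act r = act (TC 0).
Proof.
move=> [->|[->|->]]; apply: funext => v; vext.
- by rewrite /S1 /tsub /tscale /= /rho1 /rho2; case: e; pz_field.
- by rewrite /S2 /tsub /tscale /= /rho1 /rho2; case: e; pz_field.
- rewrite /z' /tsub /tscale; cbn -[w]; rewrite act_w.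
  by rewrite /rho1 /rhoW; case: e; pz_field.
Qed.

Lemma act_vadd t u v : act t (vadd u v) = vadd (act t u) (act t v).
Proof.
elim: t u v => [x| | |s IHs t IHt|s IHs t IHt] u v /=; last by rewrite IHt IHs.
all: vext; rewrite /vadd /vscale /rho1 /rho2 ?IHs ?IHt //.
- by rewrite mulrDr.
- by case: e; ring.
- by rewrite addrACA.
Qed.

Lemma act_vscale t x v : act t (vscale x v) = vscale x (act t v).
Proof.
elim: t v => [y| | |s IHs t IHt|s IHs t IHt] v /=; last by rewrite IHt IHs.
all: vext; rewrite /vadd /vscale /rho1 /rho2 ?IHs ?IHt //.
- by rewrite mulrCA.
- by case: e; ring.
- by rewrite mulrDr.
Qed.

Lemma act_UQ_eq a b : UQ_eq q a b -> act a = act b.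
Proof.
elim=> {a b} /=.
- by [].
- by move=> a b _ ->.
- by move=> a b c _ -> _ ->.
- by move=> a a' b b' _ -> _ ->.
- by move=> a a' b b' _ -> _ ->.
- by move=> a b c; apply: funext => v; apply: funext => P; rewrite /vadd addrA.
- by move=> a b; apply: funext => v; apply: funext => P; rewrite /vadd addrC.
- move=> a; apply: funext => v; apply: funext => P.
  by rewrite /vadd /vscale mul0r addr0.
- move=> a; apply: funext => v; apply: funext => P.
  by rewrite /vadd /vscale mulN1r subrr mul0r.
- by [].
- by move=> a; apply: funext => v; apply: funext => P; rewrite /vscale mul1r.
- move=> a; apply: funext => v; rewrite act_vscale; apply: funext => P.
  by rewrite /vscale mul1r.
- by [].
- by move=> a b c; apply: funext => v; rewrite act_vadd.
- move=> x y; apply: funext => v; apply: funext => P.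
  by rewrite /vadd /vscale mulrDl.
- by move=> x y; apply: funext => v; apply: funext => P; rewrite /vscale mulrA.
- by move=> x a; apply: funext => v; rewrite act_vscale.
- exact: act_relator.
Qed.

Lemma raises_rho1 : raises rho1 (0, 2, 0).
Proof.
move=> u [[[a e] c] d] [u_above uP]; exists (a + 1, e, c, d).
  by rewrite /weight triple_add; congr (_, _, _); lia.
split; last by rewrite /= addrK.
by move=> [[[a' e'] c'] d'] lt; apply: u_above; move: lt; weight_lia.
Qed.

Lemma raises_rho2 : raises rho2 (1, 0, 0).
Proof.
move=> u [[[a e] c] d] [u_above uP]; exists (a, e, c, d + 1).
  by rewrite /weight triple_add; congr (_, _, _); lia.
split=> [[[[a' e'] c'] d'] lt|].
  by case: e' lt => lt /=; rewrite !u_above ?mulr0 ?subr0 ?addr0 //; move: lt; weight_lia.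
rewrite /= addrK; case: e u_above uP => u_above uP.
  rewrite (u_above (a + 1, false, c, d + 1)); last by weight_lia.
  by rewrite mulr0 subr0 mulf_neq0 ?alpha_neq0.
rewrite (u_above (a, true, c - 1, d + 1)); last by weight_lia.
by rewrite mulr0 addr0 mulf_neq0 ?alpha_neq0.
Qed.

Lemma raises_rho3 : raises rho3 (0, 1, 1).
Proof.
move=> u [[[a e] c] d] [u_above uP].
exists (if e then (a + 1, false, c + 1, d) else (a, true, c, d)).
  by case: e {u_above uP}; rewrite /weight triple_add; congr (_, _, _); lia.
split=> [[[[a' e'] c'] d'] lt|].
  by case: e' lt => lt /=; rewrite u_above ?mulr0 //; move: lt {u_above uP}; case: e;
    weight_lia.
case: e u_above uP => u_above uP /=; rewrite ?addrK mulf_neq0 ?pz_neq0 //.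
by rewrite mulf_neq0 ?pz_neq0 ?kappa_neq0.
Qed.

Lemma raises_rhoW : raises rhoW (0, 0, 2).
Proof.
move=> u [[[a e] c] d] [u_above uP]; exists (a, e, c + 1, d).
  by rewrite /weight triple_add; congr (_, _, _); lia.
split=> [[[[a' e'] c'] d'] lt|].
  by rewrite /= u_above ?mulr0 //; move: lt; weight_lia.
rewrite /= addrK !mulf_neq0 ?pz_neq0 //.
by case: (e); rewrite ?oner_neq0 ?p_neq0.
Qed.

Definition actQ (x : UQ) : vec -> vec := act (repr x).

Lemma actQ_qproj t : actQ (qproj t) = act t.
Proof. exact/act_UQ_eq/UQ_sym/repr_qproj. Qed.

Lemma actQ_mul x y : actQ (x * y) = actQ x \o actQ y.
Proof.
elim/qproj_ind: x => s; elim/qproj_ind: y => t.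
by rewrite -qproj_TMul !actQ_qproj.
Qed.

Lemma actQ_1 : actQ 1 = id.
Proof.
rewrite -[1]/(qproj (TC 1)) actQ_qproj.
by apply: funext => v; apply: funext => P; rewrite /= /vscale mul1r.
Qed.

Lemma actQ_exp x n : actQ (x ^+ n) = iter n (actQ x).
Proof. by elim: n => [|n IHn]; rewrite ?actQ_1 // exprS actQ_mul IHn. Qed.

Lemma actQ_add x y u P : actQ (x + y) u P = actQ x u P + actQ y u P.
Proof.
elim/qproj_ind: x => s; elim/qproj_ind: y => t.
by rewrite -qproj_TAdd !actQ_qproj.
Qed.

Lemma actQ_scale a x u P : actQ (a *: x) u P = a * actQ x u P.
Proof. by elim/qproj_ind: x => t; rewrite -qproj_tscale !actQ_qproj. Qed.

Lemma actQ0 u P : actQ 0 u P = 0.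
Proof. by rewrite -[0]/(qproj (TC 0)) actQ_qproj /= /vscale mul0r. Qed.

Lemma actQ_sum I (r : seq I) (F : I -> UQ) u P :
  actQ (\sum_(i <- r) F i) u P = \sum_(i <- r) actQ (F i) u P.
Proof.
elim: r => [|i r IHr]; last by rewrite !big_cons actQ_add IHr.
by rewrite !big_nil actQ0.
Qed.

Lemma raises_pbw m : raises (actQ (pbw m)) (weight (pbw_point m)).
Proof.
case: m => [[[a e] c] d]; rewrite pbwE !actQ_mul !actQ_exp.
have raises_E3 : raises (actQ (if e then E3 else 1)) (0, e%:Z, e%:Z).
  case: e; last by rewrite actQ_1; apply: raises_id.
  by rewrite actQ_qproj act_e3; apply: raises_rho3.
have := raises_comp (raises_comp (raises_comp (raises_iter a raises_rho1) raises_E3)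
  (raises_iter c raises_rhoW)) (raises_iter d raises_rho2).
rewrite !actQ_qproj act_w; congr raises.
by rewrite /= !triple_muln !triple_add /=; congr (_, _, _); lia.
Qed.

Lemma actQ_lead x u P : x != 0 -> lead_at u P -> exists P', lead_at (actQ x u) P'.
Proof.
move=> x_neq0 uP.
have [s xE] := spanned_all x.
have [r [f [r_uniq f_neq0 rE]]] := lincomb_normal pbw s; rewrite {}rE in xE.
have r_neq0 : r != [::] by apply: contraNneq x_neq0 => r0; rewrite xE r0 big_nil.
have [m0 m0r m0max] := lex_argmax weight_pbw_inj r_neq0.
have [P0 wP0 [above0 P0_neq0]] := raises_pbw m0 uP.
have below_P0 m Pm : m \in r -> m != m0 ->
    weight Pm = weight P + weight (pbw_point m) -> lex_lt (weight Pm) (weight P0).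
  by move=> mr ne ->; rewrite wP0 lex_lt_add2l m0max.
exists P0; rewrite xE; split.
  move=> P' ltP'; rewrite actQ_sum big1_seq // => m /andP[_ mr].
  have [Pm wPm [aboveM _]] := raises_pbw m uP.
  rewrite actQ_scale aboveM ?mulr0 //.
  have [mm0 | ne] := eqVneq m m0; first by rewrite wPm mm0 -wP0.
  exact: lex_lt_trans (below_P0 m Pm mr ne wPm) ltP'.
rewrite actQ_sum (bigD1_seq m0) //= big1_seq ?addr0.
  by rewrite actQ_scale mulf_neq0 ?f_neq0.
move=> m /andP[ne mr]; have [Pm wPm [aboveM _]] := raises_pbw m uP.
by rewrite actQ_scale aboveM ?mulr0 // (below_P0 m Pm mr ne wPm).
Qed.

Lemma UQ_one_neq0 : (1 : UQ) != 0.
Proof.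
apply/eqP => one0; have := actQ0 delta0 (0, false, 0, 0).
by rewrite -one0 actQ_1 /delta0 eqxx; apply/eqP; rewrite oner_neq0.
Qed.

Lemma UQ_mul_eq0 (x y : UQ) : x * y = 0 -> x = 0 \/ y = 0.
Proof.
move=> xy0; have [x0 | x_neq0] := eqVneq x 0; first by left.
have [y0 | y_neq0] := eqVneq y 0; first by right.
have [P1 lead1] := actQ_lead y_neq0 (lead_delta0 k).
have [P2 [_]] := actQ_lead x_neq0 lead1.
by rewrite -[actQ x _]/((actQ x \o actQ y) delta0) -actQ_mul xy0 actQ0 eqxx.
Qed.

End Domain.

Theorem mainTheorem13 (k : closedFieldType) (hchar : [pchar k] =i pred0)
  (q : k) (hq0 : q != 0) (hq : forall n : nat, (0 < n)%N -> q ^+ n != 1) :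
  ~ UQ_eq q (TC 1) (TC 0) /\
  (forall a b : term k, UQ_eq q (TMul a b) (TC 0) ->
     UQ_eq q a (TC 0) \/ UQ_eq q b (TC 0)).
Proof.
have q4_neq1 := hq 4%N isT.
split; first by move/qproj_eq0; apply/eqP/(UQ_one_neq0 hq0 q4_neq1).
move=> a b /qproj_eq0; rewrite qproj_TMul => /(UQ_mul_eq0 hq0 q4_neq1).
by case=> /qproj_eq0; [left | right].
Qed.
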